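(* For every $n\in\mathbb N$, the tuple $(\mathbb{T}_{n+1}^-,\iota^n,\kappa^n)$ is a Kruskal derivative of the normal PO-dilator $M\circ\mathbb{T}_n$, where $\iota^n_X:X\to\mathbb{T}_{n+1}^-(X)$ is $\iota^n_X(x)=\overline x$ and $\kappa^n_X:M(\mathbb{T}_n(\mathbb{T}_{n+1}^-(X)))\to\mathbb{T}_{n+1}^-(X)$ is $\kappa^n_X([s_0,\dots,s_{m-1}])=0\star[\pi^n_X(s_0),\dots,\pi^n_X(s_{m-1})]$.
   Context: A quasi embedding between partial orders $X,Y$ is a function $f$ with $f(x)\leq_Y f(y)\Rightarrow x\leq_X y$; an embedding also satisfies the converse. $\mathrm{PO}$ is the category of partial orders and quasi embeddings. $[X]^{<\omega}$ denotes finite subsets, $[f]^{<\omega}(a)=\{f(x)\mid x\in a\}$. A PO-dilator is a functor $W:\mathrm{PO}\to\mathrm{PO}$ mapping embeddings to embeddings, with a natural transformation $\operatorname{supp}^W:W\Rightarrow[\cdot]^{<\omega}$ such that for every embedding $f:X\to Y$, $\operatorname{rng}(W(f))=\{\sigma\in W(Y)\mid\operatorname{supp}^W_Y(\sigma)\subseteq\operatorname{rng}(f)\}$. For finite $a,b\subseteq X$, $a\leq^{\mathrm{fin}}_X b$ iff every $x\in a$ has some $y\in b$ with $x\leq_X y$ ($z\leq^{\mathrm{fin}}_X b$ means $\{z\}\leq^{\mathrm{fin}}_X b$). $W$ is normal if $\sigma\leq_{W(X)}\tau$ implies $\operatorname{supp}^W_X(\sigma)\leq^{\mathrm{fin}}_X\operatorname{supp}^W_X(\tau)$.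 The composition $V\circ W$ of PO-dilators is the composite functor with $\operatorname{supp}^{V\circ W}_X(\sigma)=\bigcup\{\operatorname{supp}^W_X(s)\mid s\in\operatorname{supp}^V_{W(X)}(\sigma)\}$. A Kruskal fixed point of $W$ over $X$ is a partial order $Z$ with $\iota:X\to Z$, $\kappa:W(Z)\to Z$ such that $\operatorname{rng}(\iota)\cap\operatorname{rng}(\kappa)=\emptyset$ and, for all $x,y\in X$, $\sigma,\tau\in W(Z)$: $\iota(x)\leq_Z\iota(y)\Rightarrow x\leq_X y$; $\iota(x)\leq_Z\kappa(\tau)$ iff $\iota(x)\leq^{\mathrm{fin}}_Z\operatorname{supp}^W_Z(\tau)$; $\kappa(\sigma)\not\leq_Z\iota(y)$; $\kappa(\sigma)\leq_Z\kappa(\tau)$ iff ($\sigma\leq_{W(Z)}\tau$ or $\kappa(\sigma)\leq^{\mathrm{fin}}_Z\operatorname{supp}^W_Z(\tau)$). It is initial if for every Kruskal fixed point $(Z',\iota',\kappa')$ of $W$ over $X$ there is a unique quasi embedding $f:Z\to Z'$ with $f\circ\iota=\iota'$ and $f\circ\kappa=\kappa'\circ W(f)$. A Kruskal derivative of a normal PO-dilator $W$ is a tuple $(\mathcal T W,\iota,\kappa)$ with $\mathcal T W$ a normal PO-dilator and families $\iota_X:X\to\mathcal T W(X)$, $\kappa_X:W(\mathcal T W(X))\to\mathcal T W(X)$ such that (i) each $(\mathcal T W(X),\iota_X,\kappa_X)$ is an initial Kruskal fixed point of $W$ over $X$, and (ii) $\iota_Y\circ f=\mathcal T W(f)\circ\iota_X$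 and $\mathcal T W(f)\circ\kappa_X=\kappa_Y\circ W(\mathcal T W(f))$ for every quasi embedding $f:X\to Y$. $M$ is the multiset dilator: $M(X)$ is the set of finite multisets $[x_0,\dots,x_{m-1}]$ over $X$, with $[x_0,\dots,x_{m-1}]\leq_{M(X)}[y_0,\dots,y_{k-1}]$ iff there is an injection $g$ with $x_i\leq_X y_{g(i)}$ for all $i<m$, $M(f)([x_0,\dots])=[f(x_0),\dots]$, $\operatorname{supp}^M_X([x_0,\dots,x_{m-1}])=\{x_0,\dots,x_{m-1}\}$. For $n\in\mathbb N$ and a partial order $X$, $\mathbb{T}_n(X)$ is generated by $\overline x$ ($x\in X$) and $i\star\sigma$ ($\sigma\in M(\mathbb{T}_n(X))$, $i<n$); $\mathbb{T}_n^-(X)=\{\overline x\mid x\in X\}\cup\{0\star\sigma\mid\sigma\in M(\mathbb{T}_n(X))\}$ for $n>0$. The partial order $\leq_{\mathbb{T}_n(X)}$: $\overline x\leq t$ iff either $t=\overline y$ with $x\leq_X y$, or $t=j\star[t_0,\dots,t_{m-1}]$ and $\overline x\leq t_l$ for some $l$; $i\star\sigma\leq t$ iff either $t=i\star\tau$ with $\sigma\leq_{M(\mathbb{T}_n(X))}\tau$, or $t=j\star[t_0,\dots,t_{m-1}]$ with $j\geq i$ and $i\star\sigma\leq t_l$ for some $l$; $\mathbb{T}_n^-(X)$ carries the restricted order. $\mathbb{T}_n(f)(\overline x)=\overline{f(x)}$, $\mathbb{T}_n(f)(i\star[t_0,\dots])=i\star[\mathbb{T}_n(f)(t_0),\dots]$,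 $\mathbb{T}_n^-(f)$ its restriction; $\operatorname{supp}^{\mathbb{T}_n}_X(\overline x)=\{x\}$, $\operatorname{supp}^{\mathbb{T}_n}_X(i\star[t_0,\dots,t_{m-1}])=\bigcup_l\operatorname{supp}^{\mathbb{T}_n}_X(t_l)$, and $\operatorname{supp}^{\mathbb{T}_n^-}_X$ its restriction. With these, $\mathbb{T}_n$ and $\mathbb{T}_{n+1}^-$ are normal PO-dilators. $\pi^n_X:\mathbb{T}_n(\mathbb{T}_{n+1}^-(X))\to\mathbb{T}_{n+1}(X)$ is defined by $\pi^n_X(\overline t)=t$ and $\pi^n_X(i\star[s_0,\dots,s_{m-1}])=(i+1)\star[\pi^n_X(s_0),\dots,\pi^n_X(s_{m-1})]$. *)

From Stdlib Require Import List Permutation Arith ClassicalEpsilon.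
Import ListNotations.

Record PreO : Type := mkPreO { car :> Type; ple : car -> car -> Prop }.

Definition is_po (X : PreO) : Prop :=
  (forall x : X, ple X x x) /\
  (forall x y z : X, ple X x y -> ple X y z -> ple X x z) /\
  (forall x y : X, ple X x y -> ple X y x -> x = y).

Definition quasi_emb (X Y : PreO) (f : X -> Y) : Prop :=
  forall x y : X, ple Y (f x) (f y) -> ple X x y.

Definition embedding (X Y : PreO) (f : X -> Y) : Prop :=
  forall x y : X, ple Y (f x) (f y) <-> ple X x y.

(* finite subsets of X are represented by lists, only ever used through
   membership [In]; a <=fin b *)
Definition fin_le (X : PreO) (a b : list X) : Prop :=
  forall x, In x a -> exists y, In y b /\ ple X x y.

Record Dil : Type := mkDil {
  dobj : PreO -> PreO;
  dmap : forall X Y : PreO, (X -> Y) -> dobj X -> dobj Y;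
  dsupp : forall X : PreO, dobj X -> list X }.

Arguments dmap d {X Y} f _.
Arguments dsupp d {X} _.

Definition is_PO_dilator (W : Dil) : Prop :=
  (forall X : PreO, is_po X -> is_po (dobj W X)) /\
  (forall (X Y : PreO) (f : X -> Y), is_po X -> is_po Y ->
     quasi_emb X Y f -> quasi_emb (dobj W X) (dobj W Y) (dmap W f)) /\
  (forall X : PreO, is_po X -> forall s : dobj W X, dmap W (fun x : X => x) s = s) /\
  (forall (X Y Z : PreO) (f : X -> Y) (g : Y -> Z), is_po X -> is_po Y -> is_po Z ->
     quasi_emb X Y f -> quasi_emb Y Z g ->
     forall s : dobj W X, dmap W (fun x => g (f x)) s = dmap W g (dmap W f s)) /\
  (forall (X Y : PreO) (f : X -> Y), is_po X -> is_po Y ->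
     embedding X Y f -> embedding (dobj W X) (dobj W Y) (dmap W f)) /\
  (forall (X Y : PreO) (f : X -> Y), is_po X -> is_po Y -> quasi_emb X Y f ->
     forall (s : dobj W X) (y : Y),
       In y (dsupp W (dmap W f s)) <-> exists x, In x (dsupp W s) /\ f x = y) /\
  (forall (X Y : PreO) (f : X -> Y), is_po X -> is_po Y -> embedding X Y f ->
     forall s : dobj W Y,
       (exists t : dobj W X, dmap W f t = s) <->
       (forall y, In y (dsupp W s) -> exists x, f x = y)).

Definition is_normal_dilator (W : Dil) : Prop :=
  is_PO_dilator W /\
  (forall X : PreO, is_po X -> forall s t : dobj W X,
     ple (dobj W X) s t -> fin_le X (dsupp W s) (dsupp W t)).

Definition compose (V W : Dil) : Dil :=
  mkDil (fun X => dobj V (dobj W X))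
        (fun X Y f => dmap V (dmap W f))
        (fun X s => flat_map (fun r => dsupp W r) (dsupp V s)).

Definition kruskal_fp (W : Dil) (X Z : PreO) (iota : X -> Z)
  (kappa : dobj W Z -> Z) : Prop :=
  is_po Z /\
  (forall (x : X) (s : dobj W Z), iota x <> kappa s) /\
  (forall x y : X, ple Z (iota x) (iota y) -> ple X x y) /\
  (forall (x : X) (t : dobj W Z),
     ple Z (iota x) (kappa t) <-> fin_le Z [iota x] (dsupp W t)) /\
  (forall (s : dobj W Z) (y : X), ~ ple Z (kappa s) (iota y)) /\
  (forall s t : dobj W Z,
     ple Z (kappa s) (kappa t) <->
     (ple (dobj W Z) s t \/ fin_le Z [kappa s] (dsupp W t))).

Definition initial_kfp (W : Dil) (X Z : PreO) (iota : X -> Z)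
  (kappa : dobj W Z -> Z) : Prop :=
  kruskal_fp W X Z iota kappa /\
  forall (Z' : PreO) (iota' : X -> Z') (kappa' : dobj W Z' -> Z'),
    kruskal_fp W X Z' iota' kappa' ->
    exists f : Z -> Z',
      (quasi_emb Z Z' f /\ (forall x, f (iota x) = iota' x) /\
       (forall s, f (kappa s) = kappa' (dmap W f s))) /\
      (forall g : Z -> Z',
         quasi_emb Z Z' g -> (forall x, g (iota x) = iota' x) ->
         (forall s, g (kappa s) = kappa' (dmap W g s)) ->
         forall z, g z = f z).

Definition kruskal_derivative (W TW : Dil)
  (iota : forall X : PreO, X -> dobj TW X)
  (kappa : forall X : PreO, dobj W (dobj TW X) -> dobj TW X) : Prop :=
  is_normal_dilator TW /\
  (forall X : PreO, is_po X -> initial_kfp W X (dobj TW X) (iota X) (kappa X)) /\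
  (forall (X Y : PreO) (f : X -> Y), is_po X -> is_po Y -> quasi_emb X Y f ->
     (forall x, iota Y (f x) = dmap TW f (iota X x)) /\
     (forall s, dmap TW f (kappa X s) = kappa Y (dmap W (dmap TW f) s))).

Definition quot (A : Type) (R : A -> A -> Prop) : Type :=
  { P : A -> Prop | exists a, P = R a }.

Definition cls {A : Type} (R : A -> A -> Prop) (a : A) : quot A R :=
  exist _ (R a) (ex_intro _ a eq_refl).

Definition rep {A : Type} {R : A -> A -> Prop} (q : quot A R) : A :=
  proj1_sig (constructive_indefinite_description _ (proj2_sig q)).

Definition ms_le {A B : Type} (R : A -> B -> Prop) (l : list A) (k : list B) : Prop :=
  exists g : nat -> nat,
    (forall i j, i < length l -> j < length l -> g i = g j -> i = j) /\
    (forall i a, nth_error l i = Some a ->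
       exists b, nth_error k (g i) = Some b /\ R a b).

Definition Mobj (X : PreO) : PreO :=
  mkPreO (quot (list X) (@Permutation X))
         (fun s t => ms_le (ple X) (rep s) (rep t)).

Definition Mdil : Dil :=
  mkDil Mobj
        (fun X Y f s => cls (@Permutation Y) (map f (rep s)))
        (fun X s => rep s).

Definition lbl (n : nat) : Type := { i : nat | i < n }.
Definition lblv {n : nat} (i : lbl n) : nat := proj1_sig i.

(* raw trees: leaves x (written \bar x) and nodes i * [t_0,...,t_{m-1}] *)
Inductive rtree (L A : Type) : Type :=
| Leaf (x : A)
| Node (i : L) (ts : list (rtree L A)).
Arguments Leaf {L A} x.
Arguments Node {L A} i ts.

(* equality of trees whose children form multisets *)
Inductive teq (L A : Type) : rtree L A -> rtree L A -> Prop :=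
| teq_leaf (x : A) : teq L A (Leaf x) (Leaf x)
| teq_node (i : L) (ts ss us : list (rtree L A)) :
    Forall2 (teq L A) ts ss -> Permutation ss us -> teq L A (Node i ts) (Node i us).

Inductive tle (L : Type) (lv : L -> nat) (X : PreO) : rtree L X -> rtree L X -> Prop :=
| tle_LL (x y : X) : ple X x y -> tle L lv X (Leaf x) (Leaf y)
| tle_LN (x : X) (j : L) (ts : list (rtree L X)) (t : rtree L X) :
    In t ts -> tle L lv X (Leaf x) t -> tle L lv X (Leaf x) (Node j ts)
| tle_NN (i : L) (ss ts : list (rtree L X)) :
    ms_le (tle L lv X) ss ts -> tle L lv X (Node i ss) (Node i ts)
| tle_NN' (i : L) (ss : list (rtree L X)) (j : L) (ts : list (rtree L X)) (t : rtree L X) :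
    lv i <= lv j -> In t ts -> tle L lv X (Node i ss) t ->
    tle L lv X (Node i ss) (Node j ts).

Fixpoint rmap {L A B : Type} (f : A -> B) (t : rtree L A) : rtree L B :=
  match t with
  | Leaf x => Leaf (f x)
  | Node i ts => Node i (map (rmap f) ts)
  end.

Fixpoint rsupp {L A : Type} (t : rtree L A) : list A :=
  match t with
  | Leaf x => [x]
  | Node _ ts => flat_map rsupp ts
  end.

Definition Tobj (n : nat) (X : PreO) : PreO :=
  mkPreO (quot (rtree (lbl n) X) (teq (lbl n) X))
         (fun s t => tle (lbl n) lblv X (rep s) (rep t)).

Definition Tdil (n : nat) : Dil :=
  mkDil (Tobj n)
        (fun X Y f s => cls (teq (lbl n) Y) (rmap f (rep s)))
        (fun X s => rsupp (rep s)).

(* T_{n+1}^- : elements \bar x or 0 * sigma with sigma in M(T_{n+1}(X)) *)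
Inductive mtree (n : nat) (A : Type) : Type :=
| MLeaf (x : A)
| MNode (ts : list (rtree (lbl (S n)) A)).
Arguments MLeaf {n A} x.
Arguments MNode {n A} ts.

Definition lbl0 (n : nat) : lbl (S n) := exist _ 0 (Nat.lt_0_succ n).

(* inclusion of T_{n+1}^-(X) into T_{n+1}(X) on raw trees *)
Definition memb {n : nat} {A : Type} (m : mtree n A) : rtree (lbl (S n)) A :=
  match m with
  | MLeaf x => Leaf x
  | MNode ts => Node (lbl0 n) ts
  end.

Definition meq (n : nat) (A : Type) (a b : mtree n A) : Prop :=
  teq (lbl (S n)) A (memb a) (memb b).

Definition Tmobj (n : nat) (X : PreO) : PreO :=
  mkPreO (quot (mtree n X) (meq n X))
         (fun s t => tle (lbl (S n)) lblv X (memb (rep s)) (memb (rep t))).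

Definition mmap {n : nat} {A B : Type} (f : A -> B) (m : mtree n A) : mtree n B :=
  match m with
  | MLeaf x => MLeaf (f x)
  | MNode ts => MNode (map (rmap f) ts)
  end.

Definition Tmdil (n : nat) : Dil :=
  mkDil (Tmobj n)
        (fun X Y f s => cls (meq n Y) (mmap f (rep s)))
        (fun X s => rsupp (memb (rep s))).

Definition lsucc {n : nat} (i : lbl n) : lbl (S n) :=
  exist _ (S (proj1_sig i)) (proj1 (Nat.succ_lt_mono _ _) (proj2_sig i)).

Fixpoint rpi {n : nat} {X : PreO} (t : rtree (lbl n) (Tmobj n X)) : rtree (lbl (S n)) X :=
  match t with
  | Leaf m => memb (rep m)
  | Node i ts => Node (lsucc i) (map rpi ts)
  end.

Definition pi (n : nat) (X : PreO) (c : Tobj n (Tmobj n X)) : Tobj (S n) X :=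
  cls (teq (lbl (S n)) X) (rpi (rep c)).

Definition iota_n (n : nat) (X : PreO) (x : X) : dobj (Tmdil n) X :=
  cls (meq n X) (MLeaf x).

Definition kappa_n (n : nat) (X : PreO)
  (s : dobj (compose Mdil (Tdil n)) (dobj (Tmdil n) X)) : dobj (Tmdil n) X :=
  cls (meq n X) (MNode (map (fun t => rep (pi n X t)) (rep s))).

(* The map pi^n raises every label of a tree in T_n(T_{n+1}^-(X)) by one and grafts the
   trees of T_{n+1}^-(X) sitting at its leaves.  It is an order embedding, and every tree of
   T_{n+1}(X) is such a grafting, obtained by cutting it at its leaves and at its label-0 nodes.
   Hence each clause of a Kruskal fixed point for kappa^n is the corresponding clause of the
   order of T_{n+1}(X).  A morphism into another Kruskal fixed point (Z', iota', kappa') is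
   forced on leaves (iota') and on label-0 nodes (kappa'), which defines it by recursion on
   trees; the fixed-point clauses of Z' make it a quasi embedding, by induction on tree size. *)

From Stdlib Require Import List Permutation Arith Lia ClassicalEpsilon
  FunctionalExtensionality PropExtensionality ProofIrrelevance Morphisms.
Import ListNotations.

Lemma proj1_sig_inj {T : Type} {P : T -> Prop} (x y : sig P) :
  proj1_sig x = proj1_sig y -> x = y.
Proof. destruct x, y; simpl; apply subset_eq_compat. Qed.

Lemma measure_ind {T : Type} (f : T -> nat) (P : T -> Prop) :
  (forall t, (forall t', f t' < f t -> P t') -> P t) -> forall t, P t.
Proof. exact (well_founded_ind (well_founded_ltof T f) P). Qed.

Lemma measure2_ind {T U : Type} (f : T -> nat) (g : U -> nat) (P : T -> U -> Prop) :
  (forall a b, (forall a' b', f a' + g b' < f a + g b -> P a' b') -> P a b) ->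
  forall a b, P a b.
Proof.
  intros H a b.
  refine (measure_ind (fun p => f (fst p) + g (snd p)) (fun p => P (fst p) (snd p)) _ (a, b)).
  intros [a' b'] IH. apply H. intros a'' b'' Hlt. exact (IH (a'', b'') Hlt).
Qed.

Lemma measure3_ind {T U V : Type} (f : T -> nat) (g : U -> nat) (h : V -> nat)
  (P : T -> U -> V -> Prop) :
  (forall a b c, (forall a' b' c', f a' + g b' + h c' < f a + g b + h c -> P a' b' c') ->
     P a b c) ->
  forall a b c, P a b c.
Proof.
  intros H a b c.
  refine (measure_ind (fun p => f (fst (fst p)) + g (snd (fst p)) + h (snd p))
           (fun p => P (fst (fst p)) (snd (fst p)) (snd p)) _ ((a, b), c)).
  intros [[a' b'] c'] IH. apply H. intros a'' b'' c'' Hlt. exact (IH ((a'', b''), c'') Hlt).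
Qed.

Lemma Forall2_in_l {A B : Type} (R : A -> B -> Prop) l k a :
  Forall2 R l k -> In a l -> exists b, In b k /\ R a b.
Proof.
  induction 1; simpl; [intros []|intros [<-|Hin]]; eauto.
  destruct (IHForall2 Hin) as (b & ? & ?); eauto.
Qed.

Lemma Forall2_in_r {A B : Type} (R : A -> B -> Prop) l k b :
  Forall2 R l k -> In b k -> exists a, In a l /\ R a b.
Proof.
  induction 1; simpl; [intros []|intros [<-|Hin]]; eauto.
  destruct (IHForall2 Hin) as (a & ? & ?); eauto.
Qed.

Lemma Forall2_impl_Forall {A B : Type} (R S : A -> B -> Prop) l k :
  Forall (fun a => forall b, R a b -> S a b) l -> Forall2 R l k -> Forall2 S l k.
Proof. intros HS HR. induction HR; inversion HS; constructor; auto. Qed.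

Lemma Forall2_map {A B C D : Type} (R : C -> D -> Prop) (f : A -> C) (g : B -> D) l k :
  Forall2 (fun a b => R (f a) (g b)) l k -> Forall2 R (map f l) (map g k).
Proof. induction 1; simpl; constructor; auto. Qed.

Lemma Forall2_map_pointwise {A B C : Type} (R : B -> C -> Prop) (f : A -> B) (g : A -> C) l :
  (forall a, In a l -> R (f a) (g a)) -> Forall2 R (map f l) (map g l).
Proof. induction l; simpl; constructor; auto. Qed.

Section Quotient.
Context {A : Type} (R : A -> A -> Prop) `{Equivalence A R}.

Lemma rep_spec (q : quot A R) : proj1_sig q = R (rep q).
Proof.
  unfold rep. destruct (constructive_indefinite_description _ _) as [a Ha]. exact Ha.
Qed.

Lemma rep_cls (a : A) : R (rep (cls R a)) a.
Proof. pose proof (rep_spec (cls R a)) as E; simpl in E. rewrite <- E. reflexivity. Qed.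

Lemma cls_rep (q : quot A R) : cls R (rep q) = q.
Proof. apply proj1_sig_inj. symmetry. apply rep_spec. Qed.

Lemma cls_eq (a b : A) : R a b -> cls R a = cls R b.
Proof.
  intro Hab. apply proj1_sig_inj; simpl.
  apply functional_extensionality; intro c.
  apply propositional_extensionality; rewrite Hab; reflexivity.
Qed.

Lemma cls_inj (a b : A) : cls R a = cls R b -> R a b.
Proof. intro E. apply (f_equal (@proj1_sig _ _)) in E. simpl in E. rewrite E. reflexivity. Qed.
End Quotient.

Fixpoint msle {A B : Type} (R : A -> B -> Prop) (l : list A) (k : list B) : Prop :=
  match l with
  | [] => True
  | a :: l' => exists b k', Permutation k (b :: k') /\ R a b /\ msle R l' k'
  end.

Section MultisetOrder.
Context {A B : Type} (R : A -> B -> Prop).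

Lemma msle_perm_r l k k' : Permutation k k' -> msle R l k -> msle R l k'.
Proof.
  destruct l as [|a l]; simpl; auto.
  intros P (b & k'' & Pb & Rab & H). exists b, k''. rewrite <- P. auto.
Qed.

Lemma msle_perm_l l l' k : Permutation l l' -> msle R l k -> msle R l' k.
Proof.
  intro P. revert k. induction P as [|a l l' P IH|a a' l|l l' l'' _ IH1 _ IH2];
    intros k H; simpl in *; auto.
  - destruct H as (b & k' & Pb & Rab & H). eauto 6.
  - destruct H as (b & k' & Pb & Rab & c & k'' & Pc & Rac & H).
    exists c, (b :: k''). split; [|split; [|exists b, k'']]; auto.
    rewrite Pb, Pc. apply perm_swap.
Qed.

#[export] Instance msle_Proper :
  Proper (@Permutation A ==> @Permutation B ==> iff) (msle R).
Proof.
  intros l l' Pl k k' Pk. split; intro H.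
  - apply (msle_perm_r _ _ _ Pk), (msle_perm_l _ _ _ Pl), H.
  - apply (msle_perm_r _ _ _ (Permutation_sym Pk)), (msle_perm_l _ _ _ (Permutation_sym Pl)), H.
Qed.

Lemma msle_in l k a : msle R l k -> In a l -> exists b, In b k /\ R a b.
Proof.
  revert k; induction l as [|a' l IH]; intros k H Ha; simpl in *; [contradiction|].
  destruct H as (b & k' & Pb & Rab & H). setoid_rewrite Pb.
  destruct Ha as [<-|Ha]; [exists b; simpl; auto|].
  destruct (IH k' H Ha) as (c & Hc & Rac). exists c. simpl; auto.
Qed.

Lemma msle_length l k : msle R l k -> length l <= length k.
Proof.
  revert k; induction l as [|a l IH]; intros k H; simpl in *; [lia|].
  destruct H as (b & k' & Pb & _ & H). rewrite Pb. simpl. specialize (IH _ H). lia.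
Qed.

Lemma Forall2_msle l k : Forall2 R l k -> msle R l k.
Proof. induction 1; simpl; eauto. Qed.

Lemma msle_map_l {C : Type} (f : C -> A) l k :
  msle R (map f l) k <-> msle (fun c b => R (f c) b) l k.
Proof.
  revert k; induction l as [|a l IH]; intro k; simpl; [tauto|].
  split; intros (b & k' & Pb & Rab & H); exists b, k'; rewrite IH in *; auto.
Qed.

Lemma msle_map_r {C : Type} (g : C -> B) l k :
  msle R l (map g k) <-> msle (fun a c => R a (g c)) l k.
Proof.
  revert k; induction l as [|a l IH]; intro k; simpl; [tauto|].
  split; intros (b & k' & Pb & Rab & H).
  - symmetry in Pb. destruct (Permutation_map_inv _ _ Pb) as ([|c k''] & E & P); [discriminate|].
    injection E as -> ->. exists c, k''. rewrite IH in H. auto.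
  - exists (g b), (map g k'). rewrite IH. split; auto. apply (Permutation_map g Pb).
Qed.

Lemma msle_list_sum (f : A -> nat) (g : B -> nat) l k :
  (forall a b, In a l -> In b k -> R a b -> f a <= g b) ->
  msle R l k -> list_sum (map f l) <= list_sum (map g k).
Proof.
  revert k; induction l as [|a l IH]; intros k Hfg H; simpl; [lia|].
  destruct H as (b & k' & Pb & Rab & H).
  rewrite (Permutation_list_sum (Permutation_map g Pb)). simpl.
  assert (f a <= g b) by (apply Hfg; [left| rewrite Pb; left|]; auto).
  assert (list_sum (map f l) <= list_sum (map g k')).
  { apply IH; auto. intros. apply Hfg; [right| rewrite Pb; right|]; auto. }
  lia.
Qed.
End MultisetOrder.

Lemma msle_impl_in {A B : Type} (R S : A -> B -> Prop) l k :
  (forall a b, In a l -> In b k -> R a b -> S a b) -> msle R l k -> msle S l k.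
Proof.
  revert k; induction l as [|a l IH]; intros k HS H; simpl in *; auto.
  destruct H as (b & k' & Pb & Rab & H). exists b, k'. setoid_rewrite Pb in HS.
  split; [|split]; auto. apply HS; simpl; auto.
  apply IH; auto. intros. apply HS; simpl; auto.
Qed.

Lemma msle_refl {A : Type} (R : A -> A -> Prop) l : (forall a, In a l -> R a a) -> msle R l l.
Proof.
  intro H. apply Forall2_msle. induction l; constructor; simpl in *; auto.
Qed.

Lemma msle_trans {A B C : Type} (R : A -> B -> Prop) (S : B -> C -> Prop) (T : A -> C -> Prop)
  l k m :
  (forall a b c, In a l -> In b k -> In c m -> R a b -> S b c -> T a c) ->
  msle R l k -> msle S k m -> msle T l m.
Proof.
  revert k m; induction l as [|a l IH]; intros k m HT H1 H2; simpl in *; auto.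
  destruct H1 as (b & k' & Pb & Rab & H1). rewrite Pb in H2; setoid_rewrite Pb in HT.
  destruct H2 as (c & m' & Pc & Sbc & H2). setoid_rewrite Pc in HT.
  exists c, m'. split; [|split]; auto.
  - apply HT with b; simpl; auto.
  - apply IH with k'; auto. intros. apply HT with b0; simpl; auto.
Qed.

Lemma nth_error_app_cons_skip {A : Type} (k1 k2 : list A) b j : j <> length k1 ->
  nth_error (k1 ++ b :: k2) j = nth_error (k1 ++ k2) (if j <? length k1 then j else j - 1).
Proof.
  intro H. destruct (Nat.ltb_spec j (length k1)).
  - rewrite !nth_error_app1; auto.
  - rewrite !nth_error_app2 by lia. replace (j - length k1) with (S (j - 1 - length k1)) by lia.
    reflexivity.
Qed.

Lemma ms_le_msle {A B : Type} (R : A -> B -> Prop) l k : ms_le R l k <-> msle R l k.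
Proof.
  split.
  - revert k; induction l as [|a l IH]; intros k [g [Hinj Hg]]; simpl; auto.
    destruct (Hg 0 a eq_refl) as (b & Hb & Rab).
    destruct (nth_error_split _ _ Hb) as (k1 & k2 & -> & Hk1).
    exists b, (k1 ++ k2). split; [symmetry; apply Permutation_middle|split; auto].
    apply IH. exists (fun i => if g (S i) <? g 0 then g (S i) else g (S i) - 1). split.
    + intros i j Hi Hj E.
      assert (g (S i) <> g 0) by (intro C; apply Hinj in C; simpl; lia).
      assert (g (S j) <> g 0) by (intro C; apply Hinj in C; simpl; lia).
      assert (g (S i) = g (S j)) as C
        by (destruct (Nat.ltb_spec (g (S i)) (g 0)), (Nat.ltb_spec (g (S j)) (g 0)); lia).
      apply Hinj in C; simpl; lia.
    + intros i a' Ha'. destruct (Hg (S i) a' Ha') as (b' & Hb' & Rab'). exists b'. split; auto.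
      assert (i < length l) by (apply nth_error_Some; congruence).
      assert (g (S i) <> g 0) by (intro C; apply Hinj in C; simpl; lia).
      rewrite nth_error_app_cons_skip in Hb' by lia. rewrite Hk1 in Hb'. exact Hb'.
  - revert k; induction l as [|a l IH]; intros k H; simpl in *.
    + exists (fun i => i). split; auto. intros [|i]; discriminate.
    + destruct H as (b & k' & Pb & Rab & H). destruct (IH _ H) as [g [Hinj Hg]].
      destruct (proj1 (Permutation_nth_error _ _) Pb) as (_ & f & Finj & Hf).
      exists (fun i => f (match i with 0 => 0 | S i => S (g i) end)). split.
      * intros [|i] [|j] Hi Hj E; apply Finj in E; simpl in *; try lia; try discriminate.
        injection E as E. apply Hinj in E; lia.
      * intros [|i] a' Ha'; rewrite <- Hf; simpl in *; [injection Ha' as <-; eauto|auto].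
Qed.

Lemma Permutation_cons_cases {A : Type} (a a' : A) l l' : Permutation (a :: l) (a' :: l') ->
  (a = a' /\ Permutation l l') \/
  exists C, Permutation l (a' :: C) /\ Permutation l' (a :: C).
Proof.
  intro P. assert (In a (a' :: l')) as [<-|Ha] by (rewrite <- P; left; auto).
  - left. split; auto. eapply Permutation_cons_inv; eauto.
  - right. apply in_split in Ha. destruct Ha as (p & q & ->). exists (p ++ q). split.
    + apply Permutation_cons_inv with a. rewrite P, <- Permutation_middle. apply perm_swap.
    + symmetry. apply Permutation_middle.
Qed.

Lemma msle_replace {A B : Type} (R : A -> B -> Prop) l b b' C :
  (forall a, R a b -> R a b') -> msle R l (b :: C) -> msle R l (b' :: C).
Proof.
  intro Hb. revert C; induction l as [|a l IH]; intros C H; simpl in *; auto.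
  destruct H as (c & k' & Pc & Rac & H).
  destruct (Permutation_cons_cases _ _ _ _ Pc) as [[<- P]|(D & P1 & P2)].
  - exists b', k'. auto.
  - exists c, (b' :: D). split; [rewrite P1; apply perm_swap|split; auto].
    apply IH. rewrite <- P2. exact H.
Qed.

Lemma exists_maximal {A : Type} (R : A -> A -> Prop) (R_trans : Transitive R) l : l <> [] ->
  exists a l', Permutation l (a :: l') /\ forall a', In a' l -> R a a' -> R a' a.
Proof.
  induction l as [|x l IH]; intro Hne; [congruence|].
  destruct l as [|y l].
  - exists x, []. split; auto. intros a' [<-|[]]; auto.
  - destruct IH as (m & l' & P & Hm); [congruence|].
    destruct (classic (R m x)) as [Hmx|Hmx].
    + exists x, (y :: l). split; auto. intros a' [<-|Ha'] H; auto.
      transitivity m; auto. apply Hm; auto. transitivity x; auto.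
    + exists m, (x :: l'). split; [rewrite P; apply perm_swap|].
      intros a' [<-|Ha'] H; [contradiction|]. auto.
Qed.

Section MultisetAntisymmetry.
Context {A : Type} (R : A -> A -> Prop) {R_trans : Transitive R}.

(* Maximality of [a] forces its partner [b] back below [a], so both can be cancelled. *)
Lemma msle_cancel_maximal a l k : (forall a', In a' l -> R a a' -> R a' a) ->
  msle R (a :: l) k -> msle R k (a :: l) ->
  exists b k', Permutation k (b :: k') /\ R a b /\ R b a /\ msle R l k' /\ msle R k' l.
Proof.
  intros Hmax (b & k' & Pb & Rab & H1) H2. rewrite Pb in H2.
  destruct H2 as (a' & l' & Pa' & Rba' & H2).
  assert (Raa' : R a a') by (transitivity b; auto).
  assert (Rba : R b a).
  { destruct (Permutation_cons_cases _ _ _ _ Pa') as [[<- _]|(C & P1 & _)]; auto.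
    transitivity a'; auto. apply Hmax; auto. rewrite P1; left; auto. }
  exists b, k'. do 4 (split; auto).
  destruct (Permutation_cons_cases _ _ _ _ Pa') as [[_ P]|(C & P1 & P2)].
  - rewrite P. exact H2.
  - rewrite P1. apply msle_replace with a; [intros; transitivity a; auto|]. rewrite <- P2. exact H2.
Qed.

Lemma msle_antisym (E : A -> A -> Prop) l k :
  (forall a b, In a l -> In b k -> R a b -> R b a -> E a b) ->
  msle R l k -> msle R k l -> exists k', Forall2 E l k' /\ Permutation k' k.
Proof.
  revert k. induction l as [l IH] using (measure_ind (@length A)). intros k HE H1 H2.
  destruct l as [|a0 l0].
  - destruct k; [exists []; auto|]. apply msle_length in H2. simpl in H2. lia.
  - destruct (exists_maximal R _ (a0 :: l0)) as (a & l & Pa & Hmax); [congruence|].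
    rewrite Pa in H1, H2. setoid_rewrite Pa in HE. setoid_rewrite Pa in Hmax.
    destruct (msle_cancel_maximal a l k) as (b & k' & Pb & Rab & Rba & H1' & H2');
      auto using in_cons.
    setoid_rewrite Pb in HE.
    destruct (IH l ltac:(apply Permutation_length in Pa; simpl in *; lia) k')
      as (k'' & F & P); auto using in_cons.
    assert (Fa : Forall2 E (a :: l) (b :: k'')) by (constructor; auto using in_eq).
    destruct (Permutation_Forall2 (Permutation_sym Pa) Fa) as (k3 & P3 & F3).
    exists k3. split; auto. rewrite <- P3, P, Pb. reflexivity.
Qed.
End MultisetAntisymmetry.

Fixpoint rtree_nested_ind {L A : Type} (P : rtree L A -> Prop)
  (HLeaf : forall x, P (Leaf x)) (HNode : forall i ts, Forall P ts -> P (Node i ts))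
  (t : rtree L A) : P t :=
  match t with
  | Leaf x => HLeaf x
  | Node i ts => HNode i ts
      ((fix F (l : list (rtree L A)) : Forall P l :=
          match l with
          | [] => Forall_nil _
          | u :: l' => Forall_cons _ (rtree_nested_ind P HLeaf HNode u) (F l')
          end) ts)
  end.

Fixpoint rsize {L A : Type} (t : rtree L A) : nat :=
  match t with Leaf _ => 1 | Node _ ts => S (list_sum (map rsize ts)) end.

Lemma list_sum_map_in {A : Type} (f : A -> nat) l a : In a l -> f a <= list_sum (map f l).
Proof.
  induction l as [|b l IH]; simpl; [intros []|intros [<-|Ha]; try specialize (IH Ha); lia].
Qed.

Ltac rsize_lia :=
  repeat match goal with
  | H : In ?t ?ts |- _ =>
      lazymatch goal with
      | _ : rsize t <= list_sum (map rsize ts) |- _ => fail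
      | _ => pose proof (list_sum_map_in rsize ts t H)
      end
  end;
  simpl in *; lia.

Section TreeEquivalence.
Context {L A : Type}.
Notation teq := (teq L A).

Lemma teq_Leaf_inv (x : A) t : teq (Leaf x) t -> t = Leaf x.
Proof. intro H; inversion H; auto. Qed.

Lemma teq_Node_inv (i : L) ts t : teq (Node i ts) t ->
  exists ss us, t = Node i us /\ Forall2 teq ts ss /\ Permutation ss us.
Proof. intro H; inversion H; subst; eauto. Qed.

Lemma teq_refl (t : rtree L A) : teq t t.
Proof.
  induction t as [x|i ts IH] using rtree_nested_ind; [constructor|].
  apply teq_node with ts; auto. induction IH; constructor; auto.
Qed.

Lemma teq_sym (s t : rtree L A) : teq s t -> teq t s.
Proof.
  revert t; induction s as [x|i ts IH] using rtree_nested_ind; intros t H.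
  - apply teq_Leaf_inv in H as ->. constructor.
  - apply teq_Node_inv in H as (ss & us & -> & F & P).
    assert (F' : Forall2 teq ss ts).
    { apply Forall2_flip. revert F. apply Forall2_impl_Forall, IH. }
    destruct (Permutation_Forall2 P F') as (ts' & P' & F'').
    apply teq_node with ts'; auto. symmetry; auto.
Qed.

Lemma teq_trans (s t u : rtree L A) : teq s t -> teq t u -> teq s u.
Proof.
  revert t u; induction s as [x|i ts IH] using rtree_nested_ind; intros t u H1 H2.
  - apply teq_Leaf_inv in H1 as ->. auto.
  - apply teq_Node_inv in H1 as (ss & us & -> & F & P).
    apply teq_Node_inv in H2 as (vs & ws & -> & F2 & P2).
    destruct (Permutation_Forall2 (Permutation_sym P) F2) as (vs' & P' & F').
    apply teq_node with vs'; [|rewrite <- P'; auto].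
    clear - IH F F'. revert vs' F'.
    induction F; intros vs' F'; inversion IH; inversion F'; subst; constructor; eauto.
Qed.

#[export] Instance teq_Equivalence : Equivalence teq.
Proof. split; [exact teq_refl | exact teq_sym | exact teq_trans]. Qed.

Lemma teq_Node_Forall2 (i : L) ts us : Forall2 teq ts us -> teq (Node i ts) (Node i us).
Proof. intro F. apply teq_node with us; auto. Qed.

Lemma teq_Node_perm (i : L) ts us : Permutation ts us -> teq (Node i ts) (Node i us).
Proof.
  intro P. apply teq_node with ts; [|exact P].
  clear P. induction ts; constructor; [reflexivity|assumption].
Qed.

Lemma rsize_teq (s t : rtree L A) : teq s t -> rsize s = rsize t.
Proof.
  revert t; induction s as [x|i ts IH] using rtree_nested_ind; intros t H.
  - apply teq_Leaf_inv in H as ->. reflexivity.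
  - apply teq_Node_inv in H as (ss & us & -> & F & P). simpl. f_equal.
    rewrite <- (Permutation_list_sum (Permutation_map rsize P)). f_equal.
    clear P. revert IH. induction F; intro IH; inversion IH; subst; simpl; f_equal; auto.
Qed.

Lemma rsupp_teq (s t : rtree L A) x : teq s t -> In x (rsupp s) <-> In x (rsupp t).
Proof.
  revert t; induction s as [y|i ts IH] using rtree_nested_ind; intros t H.
  - apply teq_Leaf_inv in H as ->. reflexivity.
  - apply teq_Node_inv in H as (ss & us & -> & F & P). simpl.
    rewrite !in_flat_map. setoid_rewrite <- P. rewrite Forall_forall in IH.
    split; intros (u & Hu & Hx).
    + destruct (Forall2_in_l _ _ _ _ F Hu) as (v & Hv & Tuv).
      exists v. rewrite <- (IH u Hu v Tuv). auto.
    + destruct (Forall2_in_r _ _ _ _ F Hu) as (v & Hv & Tvu).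
      exists v. rewrite (IH v Hv u Tvu). auto.
Qed.
End TreeEquivalence.

Lemma teq_relabel {L L' A B : Type} (relabel : L -> L') (h : rtree L A -> rtree L' B) :
  (forall i ts, h (Node i ts) = Node (relabel i) (map h ts)) ->
  forall s t, teq L A s t -> teq L' B (h s) (h t).
Proof.
  intros Hh s. induction s as [x|i ts IH] using rtree_nested_ind; intros t H.
  - apply teq_Leaf_inv in H as ->. reflexivity.
  - apply teq_Node_inv in H as (ss & us & -> & F & P). rewrite !Hh.
    apply teq_node with (map h ss); [|apply Permutation_map; auto].
    apply Forall2_map. revert F. apply Forall2_impl_Forall, IH.
Qed.

Section TreeOrder.
Context {L : Type} (lv : L -> nat) (X : PreO).
Notation tle := (tle L lv X).
Notation teq := (teq L X).

Lemma tle_leaves (x y : X) : tle (Leaf x) (Leaf y) <-> ple X x y.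
Proof. split; intro H; [inversion H; auto | constructor; auto]. Qed.

Lemma tle_leaf_node (x : X) j ts :
  tle (Leaf x) (Node j ts) <-> exists t, In t ts /\ tle (Leaf x) t.
Proof.
  split; intro H; [inversion H; subst; eauto | destruct H as (t & ? & ?); econstructor; eauto].
Qed.

Lemma tle_node_leaf i ss (y : X) : ~ tle (Node i ss) (Leaf y).
Proof. intro H; inversion H. Qed.

Lemma tle_nodes i ss j ts : tle (Node i ss) (Node j ts) <->
  (i = j /\ msle tle ss ts) \/ (lv i <= lv j /\ exists t, In t ts /\ tle (Node i ss) t).
Proof.
  rewrite <- ms_le_msle. split; intro H.
  - inversion H; subst; eauto.
  - destruct H as [[-> H]|(H & t & Ht & H')]; [apply tle_NN | eapply tle_NN']; eauto.
Qed.

Lemma tle_rsize s t : tle s t -> rsize s <= rsize t.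
Proof.
  intro H. induction s, t as [s t IH] using (measure2_ind (@rsize L X) (@rsize L X)).
  destruct s as [x|i ss], t as [y|j ts].
  - simpl; lia.
  - simpl; lia.
  - apply tle_node_leaf in H as [].
  - apply tle_nodes in H as [[-> H]|(_ & t & Ht & H)].
    + simpl. apply le_n_S. revert H. apply msle_list_sum.
      intros a b Ha Hb. apply IH. rsize_lia.
    + assert (rsize (Node i ss) <= rsize t) by (apply IH; auto; rsize_lia). rsize_lia.
Qed.

Lemma tle_trans (X_trans : forall x y z : X, ple X x y -> ple X y z -> ple X x z) s t u :
  tle s t -> tle t u -> tle s u.
Proof.
  revert s t u.
  refine (measure3_ind rsize rsize rsize (fun s t u => tle s t -> tle t u -> tle s u) _).
  intros s t u IH H1 H2.
  destruct s as [x|i ss], t as [y|j ts], u as [z|k us];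
    try (apply tle_node_leaf in H1 as []); try (apply tle_node_leaf in H2 as []).
  - rewrite tle_leaves in *. eauto.
  - apply tle_leaf_node in H2 as (u & Hu & H2). apply tle_leaf_node. exists u. split; auto.
    apply IH with (Leaf y); auto. rsize_lia.
  - pose proof (proj1 (tle_leaf_node _ _ _) H1) as (t & Ht & H1t). apply tle_leaf_node.
    apply tle_nodes in H2 as [[<- H2]|(_ & u & Hu & H2)].
    + destruct (msle_in _ _ _ _ H2 Ht) as (u & Hu & Htu). exists u. split; auto.
      apply IH with t; auto. rsize_lia.
    + exists u. split; auto. apply IH with (Node j ts); auto. rsize_lia.
  - apply tle_nodes.
    destruct (proj1 (tle_nodes _ _ _ _) H1) as [[<- M1]|(L1 & t & Ht & H1t)],
      (proj1 (tle_nodes _ _ _ _) H2) as [[<- M2]|(L2 & u & Hu & H2u)].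
    + left. split; auto. revert M1 M2. apply msle_trans.
      intros a b c Ha Hb Hc. apply IH. rsize_lia.
    + right. split; auto. exists u. split; auto. apply IH with (Node i ts); auto. rsize_lia.
    + right. split; auto. destruct (msle_in _ _ _ _ M2 Ht) as (u & Hu & Htu).
      exists u. split; auto. apply IH with t; auto. rsize_lia.
    + right. split; [lia|]. exists u. split; auto. apply IH with (Node j ts); auto. rsize_lia.
Qed.

Lemma teq_tle (X_refl : forall x : X, ple X x x) s t : teq s t -> tle s t.
Proof.
  revert t; induction s as [x|i ss IH] using rtree_nested_ind; intros t H.
  - apply teq_Leaf_inv in H as ->. apply tle_leaves; auto.
  - apply teq_Node_inv in H as (ss' & us & -> & F & P).
    apply tle_nodes. left. split; auto. rewrite <- P. apply Forall2_msle.
    revert F. apply Forall2_impl_Forall, IH.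
Qed.

Lemma tle_antisym (HX : is_po X) s t : tle s t -> tle t s -> teq s t.
Proof.
  destruct HX as (_ & X_trans & X_antisym).
  revert t. induction s as [s IH] using (measure_ind (@rsize L X)). intros t H1 H2.
  destruct s as [x|i ss], t as [y|j ts];
    try (apply tle_node_leaf in H1 as []); try (apply tle_node_leaf in H2 as []).
  - rewrite tle_leaves in *. rewrite (X_antisym _ _ H1 H2). reflexivity.
  - pose proof (tle_rsize _ _ H1). pose proof (tle_rsize _ _ H2).
    apply tle_nodes in H1 as [[<- H1]|(_ & t & Ht & H1)];
      [|pose proof (tle_rsize _ _ H1); rsize_lia].
    apply tle_nodes in H2 as [[_ H2]|(_ & t & Ht & H2)];
      [|pose proof (tle_rsize _ _ H2); rsize_lia].
    destruct (msle_antisym tle (R_trans := fun a b c => tle_trans X_trans a b c) teq ss ts)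
      as (ts' & F & P); auto.
    + intros a b Ha _ Hab Hba. apply IH; auto. rsize_lia.
    + apply teq_node with ts'; auto.
Qed.
End TreeOrder.

Lemma tle_Proper {L : Type} (lv : L -> nat) (X : PreO) (HX : is_po X) :
  Proper (teq L X ==> teq L X ==> iff) (tle L lv X).
Proof.
  destruct HX as (X_refl & X_trans & _).
  assert (forall s s' t t', teq L X s s' -> teq L X t t' -> tle L lv X s t -> tle L lv X s' t').
  { intros s s' t t' Hs Ht H. apply tle_trans with s; auto. apply teq_tle; auto. symmetry; auto.
    apply tle_trans with t; auto. apply teq_tle; auto. }
  intros s s' Hs t t' Ht. split; apply H; auto; symmetry; auto.
Qed.

Section TreeMap.
Context {L : Type}.

Lemma rmap_teq {A B : Type} (f : A -> B) s t : teq L A s t -> teq L B (rmap f s) (rmap f t).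
Proof. apply (teq_relabel (fun i => i)). reflexivity. Qed.

#[export] Instance rmap_Proper {A B : Type} (f : A -> B) :
  Proper (teq L A ==> teq L B) (rmap f).
Proof. intros s t. apply rmap_teq. Qed.

Lemma rmap_id {A : Type} (t : rtree L A) : rmap (fun x => x) t = t.
Proof.
  induction t as [x|i ts IH] using rtree_nested_ind; simpl; f_equal.
  induction IH; simpl; f_equal; auto.
Qed.

Lemma rmap_comp {A B C : Type} (f : A -> B) (g : B -> C) (t : rtree L A) :
  rmap (fun x => g (f x)) t = rmap g (rmap f t).
Proof.
  induction t as [x|i ts IH] using rtree_nested_ind; simpl; f_equal.
  induction IH; simpl; f_equal; auto.
Qed.

Lemma rmap_ext_in {A B : Type} (f g : A -> B) (t : rtree L A) :
  (forall x, In x (rsupp t) -> f x = g x) -> rmap f t = rmap g t.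
Proof.
  induction t as [x|i ts IH] using rtree_nested_ind; simpl; intro H.
  - f_equal. apply H; left; auto.
  - f_equal. apply map_ext_in. intros t Ht. rewrite Forall_forall in IH. apply IH; auto.
    intros x Hx. apply H, in_flat_map; eauto.
Qed.

Lemma rsupp_rmap {A B : Type} (f : A -> B) (t : rtree L A) : rsupp (rmap f t) = map f (rsupp t).
Proof.
  induction t as [x|i ts IH] using rtree_nested_ind; simpl; auto.
  induction IH; simpl; auto. rewrite map_app. f_equal; auto.
Qed.

Lemma in_rsupp_Node {A : Type} (i : L) ts t (x : A) :
  In t ts -> In x (rsupp t) -> In x (rsupp (Node i ts)).
Proof. intros. simpl. apply in_flat_map. eauto. Qed.

Lemma rmap_surj {A B : Type} (f : A -> B) (t : rtree L B) :
  (forall y, In y (rsupp t) -> exists x, f x = y) -> exists s, rmap f s = t.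
Proof.
  induction t as [y|j ts IH] using rtree_nested_ind; intro H.
  - destruct (H y) as [x <-]; [left; auto|]. exists (Leaf x); auto.
  - assert (exists ss, map (rmap f) ss = ts) as [ss <-].
    { induction IH as [|t ts Ht _ IH'].
      - exists []; auto.
      - destruct Ht as [s <-]; [intros y Hy; apply H; simpl; apply in_app_iff; auto|].
        destruct IH' as [ss <-]; [intros y Hy; apply H; simpl; apply in_app_iff; auto|].
        exists (s :: ss). reflexivity. }
    exists (Node j ss). reflexivity.
Qed.

Context (lv : L -> nat).

Lemma tle_rmap_reflect (X Y : PreO) (f : X -> Y) s t :
  (forall x y, In x (rsupp s) -> In y (rsupp t) -> ple Y (f x) (f y) -> ple X x y) ->
  tle L lv Y (rmap f s) (rmap f t) -> tle L lv X s t.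
Proof.
  intros Hf H. induction s, t as [s t IH] using (measure2_ind (@rsize L X) (@rsize L X)).
  destruct s as [x|i ss], t as [y|j ts]; simpl in H.
  - apply tle_leaves in H. apply tle_leaves. apply Hf; simpl; auto.
  - apply tle_leaf_node in H as (t' & Ht' & H). apply in_map_iff in Ht' as (t & <- & Ht).
    apply tle_leaf_node. exists t. split; auto.
    apply IH; [rsize_lia| |exact H].
    intros x' y' Hx' Hy'. apply Hf; eauto using in_rsupp_Node.
  - apply tle_node_leaf in H as [].
  - apply tle_nodes in H. apply tle_nodes. destruct H as [[<- H]|(Hl & t' & Ht' & H)].
    + left. split; auto. rewrite msle_map_l, msle_map_r in H. revert H. apply msle_impl_in.
      intros a b Ha Hb. apply IH.
      * rsize_lia.
      * intros x' y' Hx' Hy'. apply Hf; eauto using in_rsupp_Node.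
    + right. split; auto. apply in_map_iff in Ht' as (t & <- & Ht).
      exists t. split; auto. apply IH; [rsize_lia| |exact H].
      intros x' y' Hx' Hy'. apply Hf; eauto using in_rsupp_Node.
Qed.

Lemma tle_rmap (X Y : PreO) (f : X -> Y) s t :
  (forall x y, ple X x y -> ple Y (f x) (f y)) ->
  tle L lv X s t -> tle L lv Y (rmap f s) (rmap f t).
Proof.
  intros Hf H. induction s, t as [s t IH] using (measure2_ind (@rsize L X) (@rsize L X)).
  destruct s as [x|i ss], t as [y|j ts]; simpl.
  - apply tle_leaves in H. apply tle_leaves. auto.
  - apply tle_leaf_node in H as (t & Ht & H). apply tle_leaf_node.
    exists (rmap f t). split; [apply in_map; auto|].
    apply (IH (Leaf x) t); auto. rsize_lia.
  - apply tle_node_leaf in H as [].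
  - apply tle_nodes in H. apply tle_nodes. destruct H as [[<- H]|(Hl & t & Ht & H)].
    + left. split; auto. rewrite msle_map_l, msle_map_r. revert H. apply msle_impl_in.
      intros a b Ha Hb. apply IH. rsize_lia.
    + right. split; auto. exists (rmap f t). split; [apply in_map; auto|].
      apply (IH (Node i ss) t); auto. rsize_lia.
Qed.

Lemma tle_rsupp (X : PreO) s t :
  tle L lv X s t -> fin_le X (rsupp s) (rsupp t).
Proof.
  intro H. induction s, t as [s t IH] using (measure2_ind (@rsize L X) (@rsize L X)).
  assert (Hchild : forall (s' t' : rtree L X) j ts', In t' ts' -> fin_le X (rsupp s') (rsupp t') ->
            fin_le X (rsupp s') (rsupp (Node j ts'))).
  { intros s' t' j ts' Ht' Hf z Hz. destruct (Hf z Hz) as (w & Hw & Hzw).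
    exists w. eauto using in_rsupp_Node. }
  destruct s as [x|i ss], t as [y|j ts].
  - apply tle_leaves in H. intros z [<-|[]]. exists y. simpl; auto.
  - apply tle_leaf_node in H as (t & Ht & H). apply Hchild with t; auto.
    apply IH; auto. rsize_lia.
  - apply tle_node_leaf in H as [].
  - apply tle_nodes in H as [[<- H]|(_ & t & Ht & H)].
    + intros z Hz. simpl in Hz. apply in_flat_map in Hz as (s & Hs & Hz).
      destruct (msle_in _ _ _ _ H Hs) as (t & Ht & Hst).
      apply (Hchild s t i ts Ht); auto.
      apply IH; auto. rsize_lia.
    + apply Hchild with t; auto. apply IH; auto. rsize_lia.
Qed.
End TreeMap.

Definition quot_dil (F : PreO -> Type) (E : forall X, F X -> F X -> Prop)
  (le : forall X, F X -> F X -> Prop) (fmap : forall X Y : PreO, (X -> Y) -> F X -> F Y)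
  (supp : forall X : PreO, F X -> list X) : Dil :=
  mkDil (fun X => mkPreO (quot (F X) (E X)) (fun s t => le X (rep s) (rep t)))
        (fun X Y f s => cls (E Y) (fmap X Y f (rep s)))
        (fun X s => supp X (rep s)).

Section QuotientDilator.
Context (F : PreO -> Type) (E : forall X, F X -> F X -> Prop)
  (le : forall X, F X -> F X -> Prop) (fmap : forall X Y : PreO, (X -> Y) -> F X -> F Y)
  (supp : forall X : PreO, F X -> list X).
Context {E_equiv : forall X, Equivalence (E X)}.
Hypothesis E_le : forall X, is_po X -> forall a b, E X a b -> le X a b.
Hypothesis le_trans : forall X, is_po X -> forall a b c, le X a b -> le X b c -> le X a c.
Hypothesis le_antisym : forall X, is_po X -> forall a b, le X a b -> le X b a -> E X a b.
Hypothesis fmap_E : forall X Y f a b, E X a b -> E Y (fmap X Y f a) (fmap X Y f b).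
Hypothesis fmap_id : forall X a, fmap X X (fun x => x) a = a.
Hypothesis fmap_comp : forall (X Y Z : PreO) (f : X -> Y) (g : Y -> Z) a,
  fmap X Z (fun x => g (f x)) a = fmap Y Z g (fmap X Y f a).
Hypothesis fmap_reflect : forall (X Y : PreO) (f : X -> Y) a b,
  (forall x y, In x (supp X a) -> In y (supp X b) -> ple Y (f x) (f y) -> ple X x y) ->
  le Y (fmap X Y f a) (fmap X Y f b) -> le X a b.
Hypothesis fmap_mono : forall (X Y : PreO) (f : X -> Y) a b,
  (forall x y, ple X x y -> ple Y (f x) (f y)) -> le X a b -> le Y (fmap X Y f a) (fmap X Y f b).
Hypothesis supp_fmap : forall (X Y : PreO) (f : X -> Y) a y,
  In y (supp Y (fmap X Y f a)) <-> exists x, In x (supp X a) /\ f x = y.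
Hypothesis supp_E : forall X a b x, E X a b -> In x (supp X a) -> In x (supp X b).
Hypothesis fmap_surj : forall (X Y : PreO) (f : X -> Y) b,
  (forall y, In y (supp Y b) -> exists x, f x = y) -> exists a, fmap X Y f a = b.
Hypothesis le_supp : forall X, is_po X -> forall a b, le X a b -> fin_le X (supp X a) (supp X b).

Lemma le_Proper X : is_po X -> Proper (E X ==> E X ==> iff) (le X).
Proof.
  intros HX a a' Ha b b' Hb. split; intro H.
  - apply (le_trans X HX a' a b'); [apply E_le; auto; symmetry; auto|].
    apply (le_trans X HX a b b'); auto.
  - apply (le_trans X HX a a' b); [apply E_le; auto|].
    apply (le_trans X HX a' b' b); auto. apply E_le; auto. symmetry; auto.
Qed.

Lemma quot_dil_po X : is_po X -> is_po (dobj (quot_dil F E le fmap supp) X).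
Proof.
  intro HX. split; [|split]; simpl.
  - intro s. apply E_le; auto. reflexivity.
  - intros s t u. apply le_trans; auto.
  - intros s t H1 H2. rewrite <- (cls_rep (E X) s), <- (cls_rep (E X) t).
    apply cls_eq; auto.
Qed.

Lemma quot_dil_le_fmap (X Y : PreO) (f : X -> Y) s t : is_po Y ->
  ple (dobj (quot_dil F E le fmap supp) Y) (dmap (quot_dil F E le fmap supp) f s)
      (dmap (quot_dil F E le fmap supp) f t) <->
  le Y (fmap X Y f (rep s)) (fmap X Y f (rep t)).
Proof. intro HY. pose proof (le_Proper Y HY). simpl. rewrite !(rep_cls (E Y)). reflexivity. Qed.

Lemma quot_dil_normal : is_normal_dilator (quot_dil F E le fmap supp).
Proof.
  split; [split; [|split; [|split; [|split; [|split; [|split]]]]]|].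
  - exact quot_dil_po.
  - intros X Y f HX HY Hf s t. rewrite quot_dil_le_fmap by exact HY.
    apply fmap_reflect. auto.
  - intros X HX s. simpl. rewrite fmap_id. apply (cls_rep (E X)).
  - intros X Y Z f g HX HY HZ Hf Hg s. simpl. rewrite fmap_comp. apply (cls_eq (E Z)).
    apply fmap_E. symmetry. apply (rep_cls (E Y)).
  - intros X Y f HX HY Hf s t. rewrite quot_dil_le_fmap by exact HY. split.
    + apply fmap_reflect. intros. apply Hf; auto.
    + apply fmap_mono. intros. apply Hf; auto.
  - intros X Y f HX HY Hf s y. simpl. rewrite <- supp_fmap.
    split; apply supp_E; [|symmetry]; apply (rep_cls (E Y)).
  - intros X Y f HX HY Hf s. simpl. split.
    + intros [t <-] y Hy.
      apply supp_E with (b := fmap X Y f (rep t)) in Hy; [|apply (rep_cls (E Y))].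
      apply supp_fmap in Hy as (x & _ & Hx). eauto.
    + intro H. destruct (fmap_surj X Y f (rep s) H) as [a Ha]. exists (cls (E X) a).
      rewrite <- (cls_rep (E Y) s), <- Ha. apply (cls_eq (E Y)), fmap_E, (rep_cls (E X)).
  - intros X HX s t. apply le_supp; auto.
Qed.
End QuotientDilator.

Lemma embedding_quasi_emb (X Y : PreO) (f : X -> Y) : embedding X Y f -> quasi_emb X Y f.
Proof. intros H x y; apply H. Qed.

Lemma compose_normal V W : is_normal_dilator V -> is_normal_dilator W ->
  is_normal_dilator (compose V W).
Proof.
  intros [(V_po & V_qe & V_id & V_comp & V_emb & V_supp & V_rng) V_norm]
         [(W_po & W_qe & W_id & W_comp & W_emb & W_supp & W_rng) W_norm].
  split; [split; [|split; [|split; [|split; [|split; [|split]]]]]|]; simpl.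
  - auto.
  - auto.
  - intros X HX s.
    replace (dmap W (fun x : X => x)) with (fun r : dobj W X => r)
      by (apply functional_extensionality; intro; symmetry; auto).
    auto.
  - intros X Y Z f g HX HY HZ Hf Hg s.
    replace (dmap W (fun x => g (f x))) with (fun r => dmap W g (dmap W f r))
      by (apply functional_extensionality; intro; symmetry; auto).
    apply (V_comp (dobj W X) (dobj W Y) (dobj W Z)); auto.
  - auto.
  - intros X Y f HX HY Hf s y. rewrite !in_flat_map. split.
    + intros (r' & Hr' & Hy). apply V_supp in Hr' as (r & Hr & <-); auto.
      apply W_supp in Hy as (x & Hx & <-); auto. exists x. rewrite in_flat_map. eauto.
    + intros (x & Hx & <-). apply in_flat_map in Hx as (r & Hr & Hx).
      exists (dmap W f r). split; [apply V_supp|apply W_supp]; eauto.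
  - intros X Y f HX HY Hf s. split.
    + intros [t <-] y Hy. apply in_flat_map in Hy as (r' & Hr' & Hy).
      apply V_supp in Hr' as (r & _ & <-); auto using embedding_quasi_emb.
      apply W_supp in Hy as (x & _ & <-); eauto using embedding_quasi_emb.
    + intro H. apply (V_rng (dobj W X) (dobj W Y)); auto.
      intros r Hr. apply W_rng; auto. intros y Hy. apply H, in_flat_map. eauto.
  - intros X HX s t H y Hy. apply in_flat_map in Hy as (r & Hr & Hy).
    destruct (V_norm (dobj W X) (W_po X HX) s t H r Hr) as (r' & Hr' & Hrr').
    destruct (W_norm X HX r r' Hrr' y Hy) as (z & Hz & Hyz).
    exists z. rewrite in_flat_map. eauto.
Qed.

Lemma Mdil_normal : is_normal_dilator Mdil.
Proof.
  change (is_normal_dilator (quot_dil (fun X => list X) (fun X => @Permutation X)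
    (fun X => ms_le (ple X)) (fun X Y f => map f) (fun X l => l))).
  apply quot_dil_normal; try setoid_rewrite ms_le_msle.
  - intro X. apply Permutation_Equivalence.
  - intros X [X_refl _] a b P. rewrite P. apply msle_refl; auto.
  - intros X [_ [X_trans _]] a b c. apply msle_trans. eauto.
  - intros X [_ [X_trans X_antisym]] a b H1 H2.
    destruct (msle_antisym (ple X) (R_trans := X_trans) eq a b) as (b' & F & P); auto.
    replace a with b'; auto. clear - F. induction F; subst; auto.
  - intros X Y f a b P. apply Permutation_map; auto.
  - intros X a. apply map_id.
  - intros X Y Z f g a. symmetry; apply map_map.
  - intros X Y f a b Hf H. rewrite msle_map_l, msle_map_r in H. revert H. apply msle_impl_in. auto.
  - intros X Y f a b Hf H. rewrite msle_map_l, msle_map_r. revert H. apply msle_impl_in. auto.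
  - intros X Y f a y. rewrite in_map_iff. firstorder.
  - intros X a b x P. rewrite P. auto.
  - intros X Y f b H. induction b as [|y b IH]; [exists []; auto|].
    destruct (H y) as [x <-]; [left; auto|]. destruct IH as [a <-]; [intros; apply H; right; auto|].
    exists (x :: a); auto.
  - intros X _ a b H x Hx. eapply msle_in; eauto.
Qed.

Lemma tree_dil_normal (L : Type) (lv : L -> nat) :
  is_normal_dilator (quot_dil (fun X => rtree L X) (fun X => teq L X) (fun X => tle L lv X)
    (fun X Y f => rmap f) (fun X => rsupp)).
Proof.
  apply quot_dil_normal.
  - intro X. apply teq_Equivalence.
  - intros X [X_refl _] a b. apply teq_tle; auto.
  - intros X [_ [X_trans _]] a b c. apply tle_trans; auto.
  - intros X HX a b. apply tle_antisym; auto.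
  - intros X Y f a b. apply rmap_teq.
  - intros X a. apply rmap_id.
  - intros X Y Z f g a. apply rmap_comp.
  - intros X Y f a b. apply tle_rmap_reflect.
  - intros X Y f a b. apply tle_rmap.
  - intros X Y f a y. rewrite rsupp_rmap, in_map_iff. firstorder.
  - intros X a b x H. apply (rsupp_teq _ _ x H).
  - intros X Y f b. apply rmap_surj.
  - intros X _ a b. apply tle_rsupp.
Qed.

Lemma Tdil_normal n : is_normal_dilator (Tdil n).
Proof. exact (tree_dil_normal (lbl n) lblv). Qed.

#[export] Instance meq_Equivalence n A : Equivalence (meq n A).
Proof.
  unfold meq. split; intro; intros; [reflexivity | symmetry; auto | etransitivity; eauto].
Qed.

Lemma memb_mmap {n : nat} {A B : Type} (f : A -> B) (m : mtree n A) :
  memb (mmap f m) = rmap f (memb m).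
Proof. destruct m; reflexivity. Qed.

Lemma Tmdil_normal n : is_normal_dilator (Tmdil n).
Proof.
  change (is_normal_dilator (quot_dil (fun X => mtree n X) (fun X => meq n X)
    (fun X a b => tle (lbl (S n)) lblv X (memb a) (memb b))
    (fun X Y f => mmap f) (fun X a => rsupp (memb a)))).
  apply quot_dil_normal; unfold meq; try setoid_rewrite memb_mmap.
  - intro X. apply meq_Equivalence.
  - intros X [X_refl _] a b. apply teq_tle; auto.
  - intros X [_ [X_trans _]] a b c. apply tle_trans; auto.
  - intros X HX a b. apply tle_antisym; auto.
  - intros X Y f a b. apply rmap_teq.
  - intros X [x|ts]; simpl; f_equal. rewrite <- (map_id ts) at 2. apply map_ext, rmap_id.
  - intros X Y Z f g [x|ts]; simpl; f_equal. rewrite map_map. apply map_ext. intro; apply rmap_comp.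
  - intros X Y f a b. apply tle_rmap_reflect.
  - intros X Y f a b. apply tle_rmap.
  - intros X Y f a y. rewrite rsupp_rmap, in_map_iff. firstorder.
  - intros X a b x H. apply (rsupp_teq _ _ x H).
  - intros X Y f [y|ts] H.
    + destruct (H y) as [x <-]; [left; auto|]. exists (MLeaf x); auto.
    + destruct (rmap_surj f (Node (lbl0 n) ts) H) as [[x|i ss] E]; [discriminate|].
      injection E as -> <-. exists (MNode ss). reflexivity.
  - intros X _ a b. apply tle_rsupp.
Qed.

Lemma Tmobj_po n (X : PreO) : is_po X -> is_po (Tmobj n X).
Proof. apply (proj1 (proj1 (Tmdil_normal n))). Qed.

Lemma Wdil_normal n : is_normal_dilator (compose Mdil (Tdil n)).
Proof. apply compose_normal; [apply Mdil_normal | apply Tdil_normal]. Qed.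

Section Wdil.
Context (n : nat) (A B : PreO).
Notation W := (compose Mdil (Tdil n)).

Lemma Wdil_supp_dmap (f : A -> B) (s : dobj W A) y :
  In y (dsupp W (dmap W f s)) -> exists z, In z (dsupp W s) /\ f z = y.
Proof.
  simpl. rewrite in_flat_map. intros (r' & Hr' & Hy).
  rewrite (rep_cls (@Permutation _)), in_map_iff in Hr'. destruct Hr' as (c & <- & Hc).
  rewrite (rsupp_teq _ _ y (rep_cls (teq _ _) _)), rsupp_rmap, in_map_iff in Hy.
  destruct Hy as (z & <- & Hz). exists z. rewrite in_flat_map. eauto.
Qed.

Lemma Wdil_le_reflect (HB : is_po B) (f : A -> B) (s t : dobj W A) :
  (forall z z', In z (dsupp W s) -> In z' (dsupp W t) -> ple B (f z) (f z') -> ple A z z') ->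
  ple (dobj W B) (dmap W f s) (dmap W f t) -> ple (dobj W A) s t.
Proof.
  pose proof (tle_Proper (@lblv n) B HB).
  intros Hf. simpl in *. rewrite !ms_le_msle, !(rep_cls (@Permutation _)), msle_map_l, msle_map_r.
  apply msle_impl_in. intros c d Hc Hd. rewrite !(rep_cls (teq _ _)).
  apply tle_rmap_reflect. intros x y Hx Hy. apply Hf; apply in_flat_map; eauto.
Qed.
End Wdil.

Lemma fin_le_singleton (Y : PreO) (a : Y) l :
  fin_le Y [a] l <-> exists y, In y l /\ ple Y a y.
Proof.
  split; [intro H; apply H; left; auto|].
  intros (y & Hy & H) b [<-|[]]. eauto.
Qed.

Lemma lsucc_inj {n : nat} (i j : lbl n) : lsucc i = lsucc j -> i = j.
Proof.
  intro H. apply (f_equal (@proj1_sig _ _)) in H. injection H as H. apply proj1_sig_inj, H.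
Qed.

Lemma lsucc_neq_lbl0 {n : nat} (i : lbl n) : lsucc i <> lbl0 n.
Proof. intro H. apply (f_equal (@proj1_sig _ _)) in H. discriminate. Qed.

Lemma memb_rep_cls {n : nat} {X : PreO} (m : mtree n X) :
  teq (lbl (S n)) X (memb (rep (cls (meq n X) m))) (memb m).
Proof. exact (rep_cls (meq n X) m). Qed.

Section KruskalFixedPoint.
Context (n : nat) (X : PreO) (HX : is_po X).
Notation Z := (Tmobj n X).
Notation W := (compose Mdil (Tdil n)).
Notation TL := (tle (lbl (S n)) lblv X).
Notation TT := (teq (lbl (S n)) X).
Notation TLn := (tle (lbl n) lblv Z).

Local Instance TL_Proper : Proper (TT ==> TT ==> iff) TL := tle_Proper lblv X HX.

Lemma rep_pi (c : dobj (Tdil n) Z) : TT (rep (pi n X c)) (rpi (rep c)).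
Proof. apply (rep_cls (teq (lbl (S n)) X)). Qed.

Lemma rpi_teq (a b : rtree (lbl n) Z) : teq (lbl n) Z a b -> TT (rpi a) (rpi b).
Proof. apply (teq_relabel lsucc). reflexivity. Qed.

#[export] Instance rpi_Proper : Proper (teq (lbl n) Z ==> TT) rpi.
Proof. intros a b. apply rpi_teq. Qed.

Lemma memb_le_shifted (m : mtree n X) (i : lbl n) cs :
  TL (memb m) (Node (lsucc i) cs) <-> exists c, In c cs /\ TL (memb m) c.
Proof.
  destruct m as [x|ts]; simpl; [apply tle_leaf_node|].
  rewrite tle_nodes. split.
  - intros [[E _]|[_ H]]; auto. symmetry in E. apply lsucc_neq_lbl0 in E as [].
  - intro H. right. split; auto. simpl. lia.
Qed.

Lemma memb_le_rpi (m : mtree n X) b :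
  TL (memb m) (rpi b) <-> exists z, In z (rsupp b) /\ TL (memb m) (memb (rep z)).
Proof.
  induction b as [z|i bs IH] using rtree_nested_ind; simpl.
  - split; [eauto | intros (z' & [<-|[]] & H); auto].
  - rewrite memb_le_shifted, Forall_forall in *. split.
    + intros (c & Hc & H). apply in_map_iff in Hc as (b & <- & Hb).
      apply IH in H as (z & Hz & H); auto. exists z. rewrite in_flat_map. eauto.
    + intros (z & Hz & H). apply in_flat_map in Hz as (b & Hb & Hz).
      exists (rpi b). rewrite in_map_iff, IH by auto. split; eauto.
Qed.

Lemma tle_rpi a b : TLn a b <-> TL (rpi a) (rpi b).
Proof.
  induction a, b as [a b IH] using (measure2_ind (@rsize (lbl n) Z) (@rsize (lbl n) Z)).
  assert (IHchild : forall a' j bs b', In b' bs -> rsize a' <= rsize a ->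
            b = Node j bs -> (TLn a' b' <-> TL (rpi a') (rpi b'))).
  { intros a' j bs b' Hb' Ha' ->. apply IH. rsize_lia. }
  assert (IHchildren : forall i ss ts, a = Node i ss -> b = Node i ts ->
            msle TLn ss ts <-> msle TL (map rpi ss) (map rpi ts)).
  { intros i ss ts -> ->. rewrite msle_map_l, msle_map_r.
    split; apply msle_impl_in; intros s t Hs Ht; apply IH; rsize_lia. }
  destruct a as [z|i ss], b as [z'|j ts]; simpl.
  - apply tle_leaves.
  - rewrite tle_leaf_node, memb_le_shifted. split.
    + intros (t & Ht & H). exists (rpi t). split; [apply in_map; auto|].
      apply (IHchild (Leaf z) j ts t); auto.
    + intros (c & Hc & H). apply in_map_iff in Hc as (t & <- & Ht).
      exists t. split; auto. apply (IHchild (Leaf z) j ts t); auto.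
  - split; intro H; [apply tle_node_leaf in H as []|].
    destruct (rep z') as [y|ts]; simpl in H; [apply tle_node_leaf in H as []|].
    apply tle_nodes in H as [[E _]|[Hl _]]; [apply lsucc_neq_lbl0 in E as []|].
    simpl in Hl. lia.
  - rewrite !tle_nodes. unfold lblv. simpl. split.
    + intros [[<- H]|(Hl & t & Ht & H)].
      * left. rewrite <- IHchildren; eauto.
      * right. split; [lia|]. exists (rpi t). split; [apply in_map; auto|].
        apply (IHchild (Node i ss) j ts t); auto.
    + intros [[E H]|(Hl & c & Hc & H)].
      * apply lsucc_inj in E as <-. left. rewrite IHchildren; eauto.
      * right. split; [lia|]. apply in_map_iff in Hc as (t & <- & Ht).
        exists t. split; auto. apply (IHchild (Node i ss) j ts t); auto.
Qed.

Definition pi_children (s : dobj W Z) : list (rtree (lbl (S n)) X) :=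
  map (fun c => rep (pi n X c)) (rep s).

Lemma ple_Tmobj (a b : Z) : ple Z a b <-> TL (memb (rep a)) (memb (rep b)).
Proof. reflexivity. Qed.

Lemma memb_rep_iota x : TT (memb (rep (iota_n n X x))) (Leaf x).
Proof. apply (memb_rep_cls (MLeaf x)). Qed.

Lemma memb_rep_kappa s : TT (memb (rep (kappa_n n X s))) (Node (lbl0 n) (pi_children s)).
Proof. apply (memb_rep_cls (MNode _)). Qed.

Lemma memb_le_pi_children (m : mtree n X) (t : dobj W Z) :
  (exists c, In c (pi_children t) /\ TL (memb m) c) <->
  (exists z, In z (dsupp W t) /\ TL (memb m) (memb (rep z))).
Proof.
  unfold pi_children. simpl. setoid_rewrite in_flat_map. split.
  - intros (c & Hc & H). apply in_map_iff in Hc as (r & <- & Hr).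
    rewrite rep_pi, memb_le_rpi in H by exact HX. destruct H as (z & Hz & H). eauto.
  - intros (z & (r & Hr & Hz) & H). exists (rep (pi n X r)).
    rewrite in_map_iff, rep_pi, memb_le_rpi by exact HX. split; eauto.
Qed.

Lemma iota_le_iota x y : ple Z (iota_n n X x) (iota_n n X y) <-> ple X x y.
Proof. rewrite ple_Tmobj, !memb_rep_iota. apply tle_leaves. Qed.

Lemma iota_le_kappa x t :
  ple Z (iota_n n X x) (kappa_n n X t) <-> fin_le Z [iota_n n X x] (dsupp W t).
Proof.
  rewrite fin_le_singleton. setoid_rewrite ple_Tmobj.
  setoid_rewrite memb_rep_iota. rewrite memb_rep_kappa, tle_leaf_node.
  change (Leaf x) with (memb (n := n) (MLeaf x)). apply memb_le_pi_children.
Qed.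

Lemma ple_W_pi_children s t :
  ple (dobj W Z) s t <-> msle TL (pi_children s) (pi_children t).
Proof.
  simpl. unfold pi_children. rewrite ms_le_msle, msle_map_l, msle_map_r.
  split; apply msle_impl_in; intros c d _ _; rewrite !rep_pi, <- tle_rpi by exact HX; auto.
Qed.

Lemma kappa_le_kappa s t : ple Z (kappa_n n X s) (kappa_n n X t) <->
  (ple (dobj W Z) s t \/ fin_le Z [kappa_n n X s] (dsupp W t)).
Proof.
  rewrite fin_le_singleton. setoid_rewrite ple_Tmobj.
  setoid_rewrite memb_rep_kappa. rewrite tle_nodes, ple_W_pi_children.
  change (Node (lbl0 n) (pi_children s)) with (memb (MNode (n := n) (pi_children s))).
  rewrite <- memb_le_pi_children. simpl. intuition.
Qed.

Lemma Tmobj_kruskal_fp : kruskal_fp W X Z (iota_n n X) (kappa_n n X).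
Proof.
  split; [apply Tmobj_po; auto|]. split; [|split; [|split; [|split]]].
  - intros x s E. apply cls_inj in E; [|apply meq_Equivalence]. discriminate (teq_Leaf_inv _ _ E).
  - intros x y. apply iota_le_iota.
  - apply iota_le_kappa.
  - intros s y. rewrite ple_Tmobj, memb_rep_iota, memb_rep_kappa. apply tle_node_leaf.
  - apply kappa_le_kappa.
Qed.
End KruskalFixedPoint.


Definition lbl_pred {n k : nat} (p : S k < S n) : lbl n :=
  exist _ k (proj2 (Nat.succ_lt_mono k n) p).

Lemma lsucc_lbl_pred {n k : nat} (p : S k < S n) : lsucc (lbl_pred p) = exist _ (S k) p.
Proof. apply proj1_sig_inj. reflexivity. Qed.

Section Decomposition.
Context (n : nat) (X : PreO).
Notation Z := (Tmobj n X).
Notation W := (compose Mdil (Tdil n)).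
Notation TT := (teq (lbl (S n)) X).

Definition zsize (q : Z) : nat := rsize (memb (rep q)).

Fixpoint cut (t : rtree (lbl (S n)) X) : rtree (lbl n) Z :=
  match t with
  | Leaf x => Leaf (cls (meq n X) (MLeaf x))
  | Node (exist _ 0 _) ts => Leaf (cls (meq n X) (MNode ts))
  | Node (exist _ (S k) p) ts => Node (lbl_pred p) (map cut ts)
  end.

Lemma rpi_cut t : TT (rpi (cut t)) t.
Proof.
  induction t as [x|[[|k] p] ts IH] using rtree_nested_ind; simpl.
  - apply (memb_rep_cls (MLeaf x)).
  - rewrite (memb_rep_cls (MNode ts)). simpl.
    replace (lbl0 n) with (exist (fun i => i < S n) 0 p) by (apply proj1_sig_inj; reflexivity).
    reflexivity.
  - rewrite lsucc_lbl_pred. apply teq_Node_Forall2. rewrite map_map.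
    induction IH; simpl; constructor; auto.
Qed.

Lemma zsize_cut t z : In z (rsupp (cut t)) -> zsize z <= rsize t.
Proof.
  unfold zsize. induction t as [x|[[|k] p] ts IH] using rtree_nested_ind; simpl.
  - intros [<-|[]]. rewrite (rsize_teq _ _ (memb_rep_cls (MLeaf x))). simpl. lia.
  - intros [<-|[]]. rewrite (rsize_teq _ _ (memb_rep_cls (MNode ts))). simpl. lia.
  - rewrite in_flat_map. intros (u & Hu & Hz). apply in_map_iff in Hu as (t & <- & Ht).
    rewrite Forall_forall in IH. specialize (IH t Ht Hz). rsize_lia.
Qed.

Lemma rep_pi_cut t : TT (rep (pi n X (cls (teq (lbl n) Z) (cut t)))) t.
Proof. rewrite rep_pi, (rep_cls (teq (lbl n) Z)). apply rpi_cut. Qed.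

Lemma Tmobj_cases (q : Z) : (exists x, q = iota_n n X x) \/
  (exists s, q = kappa_n n X s /\ forall z, In z (dsupp W s) -> zsize z < zsize q).
Proof.
  rewrite <- (cls_rep (meq n X) q). destruct (rep q) as [x|ts]; [left; exists x; reflexivity|right].
  set (s := cls (@Permutation _) (map (fun t => cls (teq (lbl n) Z) (cut t)) ts) : dobj W Z).
  assert (Ps : Permutation (rep s) (map (fun t => cls (teq (lbl n) Z) (cut t)) ts))
    by apply (rep_cls (@Permutation _)).
  exists s. split.
  - apply (cls_eq (meq n X)). unfold meq. simpl. symmetry.
    etransitivity; [apply teq_Node_perm, Permutation_map, Ps|].
    apply teq_Node_Forall2. rewrite map_map.
    clear Ps s. induction ts; constructor; auto using rep_pi_cut.
  - intros z Hz. simpl in Hz. apply in_flat_map in Hz as (r & Hr & Hz).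
    rewrite Ps, in_map_iff in Hr. destruct Hr as (t & <- & Ht).
    rewrite (rsupp_teq _ _ z (rep_cls (teq _ _) _)) in Hz.
    apply zsize_cut in Hz. unfold zsize at 2. rewrite (rsize_teq _ _ (memb_rep_cls (MNode ts))).
    rsize_lia.
Qed.
End Decomposition.

Section Initiality.
Context (n : nat) (X : PreO).
Notation Z := (Tmobj n X).
Notation W := (compose Mdil (Tdil n)).
Notation TT := (teq (lbl (S n)) X).
Context (Z' : PreO) (iota' : X -> Z') (kappa' : dobj W Z' -> Z').

(* [hom_tree t] is [rmap kfp_hom (cut t)], computed by structural recursion on [t]. *)
Fixpoint hom_tree (t : rtree (lbl (S n)) X) : rtree (lbl n) Z' :=
  match t with
  | Leaf x => Leaf (iota' x)
  | Node (exist _ 0 _) ts =>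
      Leaf (kappa' (cls (@Permutation _) (map (fun u => cls (teq (lbl n) Z') (hom_tree u)) ts)))
  | Node (exist _ (S k) p) ts => Node (lbl_pred p) (map hom_tree ts)
  end.

Definition hom_mtree (m : mtree n X) : Z' :=
  match m with
  | MLeaf x => iota' x
  | MNode ts => kappa' (cls (@Permutation _) (map (fun u => cls (teq (lbl n) Z') (hom_tree u)) ts))
  end.

Definition kfp_hom (q : Z) : Z' := hom_mtree (rep q).

Lemma hom_tree_memb m : hom_tree (memb m) = Leaf (hom_mtree m).
Proof. destruct m; reflexivity. Qed.

Lemma hom_tree_teq a b : TT a b -> teq (lbl n) Z' (hom_tree a) (hom_tree b).
Proof.
  revert b; induction a as [x|i ts IH] using rtree_nested_ind; intros b H.
  - apply teq_Leaf_inv in H as ->. reflexivity.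
  - apply teq_Node_inv in H as (ss & us & -> & F & P).
    assert (Fh : Forall2 (teq (lbl n) Z') (map hom_tree ts) (map hom_tree ss)).
    { apply Forall2_map. revert F. apply Forall2_impl_Forall, IH. }
    destruct i as [[|k] p]; simpl.
    + enough (E : map (fun u => cls (teq (lbl n) Z') (hom_tree u)) ts =
                  map (fun u => cls (teq (lbl n) Z') (hom_tree u)) ss).
      { rewrite E, (cls_eq (@Permutation _) _ _ (Permutation_map _ P)). reflexivity. }
      rewrite <- !(map_map hom_tree). clear - Fh. induction Fh; simpl; f_equal; auto.
      apply (cls_eq (teq _ _)), H.
    + apply teq_node with (map hom_tree ss); auto. apply Permutation_map; auto.
Qed.

Lemma hom_mtree_meq a b : meq n X a b -> hom_mtree a = hom_mtree b.
Proof.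
  intro H. apply hom_tree_teq in H. rewrite !hom_tree_memb in H.
  apply teq_Leaf_inv in H. injection H; auto.
Qed.

Lemma kfp_hom_cls m : kfp_hom (cls (meq n X) m) = hom_mtree m.
Proof. apply hom_mtree_meq, (rep_cls (meq n X)). Qed.

Lemma hom_tree_rpi a : hom_tree (rpi a) = rmap kfp_hom a.
Proof.
  induction a as [z|[k p] as_ IH] using rtree_nested_ind; simpl.
  - apply hom_tree_memb.
  - rewrite Forall_forall in IH. rewrite map_map. f_equal.
    + apply proj1_sig_inj. reflexivity.
    + apply map_ext_in. auto.
Qed.

Lemma kfp_hom_iota x : kfp_hom (iota_n n X x) = iota' x.
Proof. apply kfp_hom_cls. Qed.

Lemma kfp_hom_kappa s : kfp_hom (kappa_n n X s) = kappa' (dmap W kfp_hom s).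
Proof.
  unfold kappa_n. rewrite kfp_hom_cls. simpl. do 2 f_equal. unfold pi_children.
  rewrite map_map. apply map_ext. intro c. apply (cls_eq (teq _ _)).
  rewrite <- hom_tree_rpi. apply hom_tree_teq, rep_pi.
Qed.

Lemma kfp_hom_unique (g : Z -> Z') :
  (forall x, g (iota_n n X x) = iota' x) ->
  (forall s, g (kappa_n n X s) = kappa' (dmap W g s)) ->
  forall z, g z = kfp_hom z.
Proof.
  intros Hiota Hkappa z. induction z as [z IH] using (measure_ind (zsize n X)).
  destruct (Tmobj_cases n X z) as [(x & ->)|(s & -> & Hs)].
  - rewrite Hiota, kfp_hom_iota. reflexivity.
  - rewrite Hkappa, kfp_hom_kappa. simpl. do 2 f_equal. apply map_ext_in. intros c Hc.
    f_equal. apply rmap_ext_in. intros y Hy. apply IH, Hs. simpl. apply in_flat_map. eauto.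
Qed.

Lemma kfp_hom_quasi_emb (HX : is_po X) : kruskal_fp W X Z' iota' kappa' -> quasi_emb Z Z' kfp_hom.
Proof.
  intros (HZ' & _ & iota'_le & iota'_le_kappa' & kappa'_not_le & kappa'_le).
  refine (measure2_ind (zsize n X) (zsize n X) _ _). intros a b IH H.
  assert (Hsupp : forall s z' y, In z' (dsupp W (dmap W kfp_hom s)) ->
            ple Z' y z' -> exists z, In z (dsupp W s) /\ ple Z' y (kfp_hom z)).
  { intros s z' y Hz' Hy. apply Wdil_supp_dmap in Hz' as (z & Hz & <-). eauto. }
  destruct (Tmobj_cases n X a) as [(x & ->)|(s & -> & Hs)],
    (Tmobj_cases n X b) as [(y & ->)|(t & -> & Ht)];
    rewrite ?kfp_hom_iota, ?kfp_hom_kappa in H.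
  - apply iota_le_iota; auto.
  - rewrite iota'_le_kappa', fin_le_singleton in H. destruct H as (z' & Hz' & H).
    destruct (Hsupp _ _ _ Hz' H) as (z & Hz & Hle).
    apply iota_le_kappa, fin_le_singleton; auto. exists z. split; auto.
    apply IH; [specialize (Ht z Hz); lia|]. rewrite kfp_hom_iota. exact Hle.
  - apply kappa'_not_le in H as [].
  - apply kappa_le_kappa; auto. apply kappa'_le in H as [H|H].
    + left. revert H. apply Wdil_le_reflect; auto.
      intros z z' Hz Hz'. apply IH. specialize (Hs z Hz). specialize (Ht z' Hz'). lia.
    + right. rewrite fin_le_singleton in *. destruct H as (z' & Hz' & H).
      destruct (Hsupp _ _ _ Hz' H) as (z & Hz & Hle). exists z. split; auto.
      apply IH; [specialize (Ht z Hz); lia|]. rewrite kfp_hom_kappa. exact Hle.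
Qed.
End Initiality.

Lemma Tmobj_initial n (X : PreO) : is_po X ->
  initial_kfp (compose Mdil (Tdil n)) X (Tmobj n X) (iota_n n X) (kappa_n n X).
Proof.
  intro HX. split; [apply Tmobj_kruskal_fp; auto|]. intros Z' iota' kappa' Hfp.
  exists (kfp_hom n X Z' iota' kappa'). split; [split; [|split]|].
  - apply kfp_hom_quasi_emb; auto.
  - apply kfp_hom_iota.
  - apply kfp_hom_kappa.
  - intros g _. apply kfp_hom_unique.
Qed.

Section Naturality.
Context (n : nat) (X Y : PreO) (f : X -> Y).
Notation TT := (teq (lbl (S n)) Y).

Lemma iota_natural x : iota_n n Y (f x) = dmap (Tmdil n) f (iota_n n X x).
Proof.
  apply (cls_eq (meq n Y)). unfold meq. rewrite memb_mmap.
  symmetry. apply (rmap_teq f _ (Leaf x)), (memb_rep_cls (MLeaf x)).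
Qed.

Lemma rpi_natural (a : rtree (lbl n) (Tmobj n X)) :
  TT (rpi (rmap (dmap (Tmdil n) f) a)) (rmap f (rpi a)).
Proof.
  induction a as [m|i as_ IH] using rtree_nested_ind; simpl.
  - rewrite memb_rep_cls, memb_mmap. reflexivity.
  - apply teq_Node_Forall2. rewrite !map_map. induction IH; simpl; constructor; auto.
Qed.

Lemma kappa_natural s :
  dmap (Tmdil n) f (kappa_n n X s) =
  kappa_n n Y (dmap (compose Mdil (Tdil n)) (dmap (Tmdil n) f) s).
Proof.
  apply (cls_eq (meq n Y)). unfold meq. rewrite memb_mmap.
  rewrite (rmap_teq f _ _ (memb_rep_kappa n X s)). simpl. unfold pi_children.
  rewrite (teq_Node_perm _ _ _ (Permutation_map _ (rep_cls (@Permutation _) _))).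
  apply teq_Node_Forall2. rewrite !map_map. apply Forall2_map_pointwise. intros c _.
  rewrite !rep_pi, (rep_cls (teq (lbl n) (Tmobj n Y))), rpi_natural. reflexivity.
Qed.
End Naturality.

Theorem theorem6p5 (n : nat) :
  is_normal_dilator (compose Mdil (Tdil n)) /\
  kruskal_derivative (compose Mdil (Tdil n)) (Tmdil n) (iota_n n) (kappa_n n).
Proof.
  split; [apply Wdil_normal|]. split; [apply Tmdil_normal|split].
  - intros X HX. apply Tmobj_initial, HX.
  - intros X Y f _ _ _. split; [apply iota_natural | apply kappa_natural].
Qed.
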